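(* Let $\mathfrak{I}=(\mathcal{I},[\mathcal{F}_1,\dots,\mathcal{F}_k],\mathcal{X},\pi,\sim,\mathcal{S})$ be a domain constrained interpretation and $C_1,\dots,C_4,D_1,\dots,D_4$ natural concepts that are fully specified by their features in $\mathfrak{I}$, i.e. $N^{\mathcal{I}}=\{d\in\Delta^{\mathcal{I}}\mid\varphi(N)\subseteq\pi(d)\}$ for each of them. Suppose $C_1^{\mathcal{I}}\neq\emptyset$ and $\mathfrak{I}$ satisfies the analogy assertions $C_1:C_2::C_3:C_4$, $D_1:D_2::D_3:D_4$, $D_1:D_3::D_2:D_4$ and the concept inclusions $C_1\sqsubseteq D_1$, $C_2\sqsubseteq D_2$, $C_3\sqsubseteq D_3$. Then $\mathfrak{I}$ also satisfies $C_4\sqsubseteq D_4$.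
   Context: Concepts: $C,D::=\top\mid\bot\mid A\mid C\sqcap D\mid \exists r.C\mid N$; natural concepts: $N,N'::=A'\mid N\sqcap N'\mid N\bowtie N'\mid \exists r'.N$, with $A$ a concept name, $A'$ a natural concept name, $r$ a role name, $r'$ an intra-domain role name. A domain constrained interpretation is $\mathfrak{I}=(\mathcal{I},[\mathcal{F}_1,\dots,\mathcal{F}_k],\mathcal{X},\pi,\sim,\mathcal{S})$ where $\mathcal{I}=(\Delta^{\mathcal{I}},\cdot^{\mathcal{I}})$ is a classical DL interpretation, $[\mathcal{F}_1,\dots,\mathcal{F}_k]$ partitions a nonempty finite set $\mathcal{F}$, $\mathcal{X}\subseteq2^{\mathcal{F}}$ with $\mathcal{F}\in\mathcal{X}$, $\pi:\Delta^{\mathcal{I}}\to2^{\mathcal{F}}$, $\sim$ an equivalence relation on $\{1,\dots,k\}$, $\mathcal{S}=\{\sigma_{(s,t)}\mid(s,t)\in\sim\}$ with $\sigma_{(s,t)}:\mathcal{F}_s\to\mathcal{F}_t$ bijections. With $\mathcal{C}=\{G\subseteq\mathcal{F}\mid X\not\subseteq G\ \forall X\in\mathcal{X}\}$ and $\mathcal{C}^i=\{G\in\mathcal{C}\mid G\subseteq\mathcal{F}_i\}$ it is required: (1) $X\not\subseteq\pi(d)$ for all $d$, $X\in\mathcal{X}$; (2) each $G\in\mathcal{C}$ is $\pi(d)$ for some $d$; (3) $\sigma_{(s,t)}^{-1}=\sigma_{(t,s)}$, $\sigma_{(t,u)}\circ\sigma_{(s,t)}=\sigma_{(s,u)}$;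 (4) $\sigma_{(i,j)}(G)\in\mathcal{C}$ for $G\in\mathcal{C}^i$, $(i,j)\in\sim$; (5) $\{f,g\}\in\mathcal{X}$ whenever $f\in\mathcal{F}_i$, $g\in\mathcal{F}_j$, $(i,j)\in\sim$, $i\neq j$. $\varphi(C)=\bigcap\{\pi(d)\mid d\in C^{\mathcal{I}}\}$ ($=\mathcal{F}$ if $C^{\mathcal{I}}=\emptyset$). Concepts are interpreted as usual, with $(N\bowtie N')^{\mathcal{I}}=\{d\mid\varphi(N)\cap\varphi(N')\subseteq\pi(d)\}$, and every intra-domain role name $r$ interpreted as an intra-domain relation: there is $\kappa_r:2^{\mathcal{F}}\to2^{\mathcal{F}}$ with $(\exists r.C)^{\mathcal{I}}=\{d\mid\kappa_r(\varphi(C))\subseteq\pi(d)\}$ for all $C$, $\kappa_r(G)=\bigcup_i\kappa_r(G\cap\mathcal{F}_i)$ for $G\in\mathcal{C}$, $\kappa_r(G)\subseteq\mathcal{F}_i$ for $G\in\mathcal{C}^i$, $\kappa_r(\sigma_{(i,j)}(G))=\sigma_{(i,j)}(\kappa_r(G))$ for $(i,j)\in\sim$, $G\in\mathcal{C}^i$, and $\kappa_r(G)\neq\emptyset$ for $G\in\mathcal{C}^i\setminus\{\emptyset\}$. $\delta(C)=\{i\mid\mathcal{F}_i\cap\varphi(C)\neq\emptyset\}$. For $U=\{(s_1,t_1),\dots,(s_l,t_l)\}\subseteq\sim$ with pairwise distinct $s_i$ and pairwise distinct $t_i$, the domain translation $\sigma_U:\mathcal{F}\to\mathcal{F}$ maps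 $f\in\mathcal{F}_{s_i}$ to $\sigma_{(s_i,t_i)}(f)$ and fixes all other features; $\mathrm{src}(U)=\{s_i\}$, $\mathrm{tgt}(U)=\{t_i\}$. $\mu(C,D)$ is the set of $\sigma_U$ with $\varphi(D)=\sigma_U(\varphi(C))$, $\mathrm{src}(U)\subseteq\delta(C)$, $\mathrm{tgt}(U)\cap(\delta(C)\setminus\mathrm{src}(U))=\emptyset$. An analogy assertion $C_1:C_2::D_1:D_2$ is satisfied in $\mathfrak{I}$ iff $\mu(C_1,C_2)\cap\mu(D_1,D_2)\neq\emptyset$; a concept inclusion $C\sqsubseteq D$ is satisfied iff $C^{\mathcal{I}}\subseteq D^{\mathcal{I}}$. *)

From HB Require Import structures.
From mathcomp Require Import all_boot.
From mathcomp Require Import boolp classical_sets.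

Set Implicit Arguments.
Unset Strict Implicit.
Unset Printing Implicit Defensive.

Local Open Scope classical_set_scope.

(* Syntax: concept names of type A, role names of type R.  Natural concept
   names / intra-domain role names are singled out by predicates natA / intraR. *)
Inductive concept (A R : Type) : Type :=
| CTop : concept A R
| CBot : concept A R
| CAtom : A -> concept A R
| CAnd : concept A R -> concept A R -> concept A R
| CEx : R -> concept A R -> concept A R
| CBow : concept A R -> concept A R -> concept A R.

Arguments CTop {A R}.
Arguments CBot {A R}.

Fixpoint natural (A R : Type) (natA : A -> Prop) (intraR : R -> Prop)
  (c : concept A R) : Prop :=
  match c with
  | CAtom a => natA a
  | CAnd c1 c2 => natural natA intraR c1 /\ natural natA intraR c2
  | CBow c1 c2 => natural natA intraR c1 /\ natural natA intraR c2
  | CEx r c1 => intraR r /\ natural natA intraR c1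
  | _ => False
  end.

Fixpoint is_concept (A R : Type) (natA : A -> Prop) (intraR : R -> Prop)
  (c : concept A R) : Prop :=
  match c with
  | CTop | CBot | CAtom _ => True
  | CAnd c1 c2 => is_concept natA intraR c1 /\ is_concept natA intraR c2
  | CEx _ c1 => is_concept natA intraR c1
  | CBow _ _ => natural natA intraR c
  end.

Section Semantics.
Variables (A R D F : Type) (AI : A -> set D) (RI : R -> D -> D -> Prop)
  (pi : D -> set F).

(* φ of a set of individuals: intersection of their feature sets (= F if empty) *)
Definition phiS (X : set D) : set F := [set f | forall d, X d -> pi d f].

Fixpoint ext (c : concept A R) : set D :=
  match c with
  | CTop => setT
  | CBot => set0
  | CAtom a => AI a
  | CAnd c1 c2 => ext c1 `&` ext c2
  | CEx r c1 => [set d | exists e, RI r d e /\ ext c1 e]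
  | CBow c1 c2 => [set d | phiS (ext c1) `&` phiS (ext c2) `<=` pi d]
  end.
End Semantics.

Definition consistent (F : Type) (Xc : set (set F)) (G : set F) : Prop :=
  forall X, Xc X -> ~ (X `<=` G).

Definition block (F : Type) (k : nat) (part : F -> 'I_k) (i : 'I_k) : set F :=
  [set f | part f = i].

Record dci (A R : Type) (natA : A -> Prop) (intraR : R -> Prop) : Type := DCI {
  dom : Type;
  dom_ne : inhabited dom;
  AI : A -> set dom;
  RI : R -> dom -> dom -> Prop;
  feat : finType;
  feat_ne : inhabited feat;
  k : nat;
  part : feat -> 'I_k;
  part_ne : forall i : 'I_k, exists f, part f = i;
  Xc : set (set feat);
  Xc_full : Xc setT;
  pi_ : dom -> set feat;
  sim : 'I_k -> 'I_k -> Prop;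
  sim_refl : forall i, sim i i;
  sim_sym : forall i j, sim i j -> sim j i;
  sim_trans : forall i j l, sim i j -> sim j l -> sim i l;
  sigma : 'I_k -> 'I_k -> feat -> feat;  (* relevant on F_s for s ~ t *)
  sigma_into : forall s t f, sim s t -> part f = s -> part (sigma s t f) = t;
  sigma_inv : forall s t f, sim s t -> part f = s -> sigma t s (sigma s t f) = f;
  sigma_comp : forall s t u f, sim s t -> sim t u -> part f = s ->
      sigma t u (sigma s t f) = sigma s u f;
  cond1 : forall d X, Xc X -> ~ (X `<=` pi_ d);
  cond2 : forall G, consistent Xc G -> exists d, pi_ d = G;
  cond4 : forall i j G, sim i j -> consistent Xc G -> G `<=` block part i ->
      consistent Xc (sigma i j @` G);
  cond5 : forall i j f g, sim i j -> i <> j -> part f = i -> part g = j ->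
      Xc [set f; g];
  intra : forall r, intraR r -> exists kappa : set feat -> set feat,
      (forall c, is_concept natA intraR c ->
          ext AI RI pi_ (CEx r c) = [set d | kappa (phiS pi_ (ext AI RI pi_ c)) `<=` pi_ d])
   /\ (forall G, consistent Xc G ->
          kappa G = \bigcup_(i in [set: 'I_k]) kappa (G `&` block part i))
   /\ (forall i G, consistent Xc G -> G `<=` block part i ->
          kappa G `<=` block part i)
   /\ (forall i j G, sim i j -> consistent Xc G -> G `<=` block part i ->
          kappa (sigma i j @` G) = sigma i j @` kappa G)
   /\ (forall i G, consistent Xc G -> G `<=` block part i -> G <> set0 ->
          kappa G <> set0)
}.

Unset Implicit Arguments.
Section DCIdefs.
Variables (A R : Type) (natA : A -> Prop) (intraR : R -> Prop)
  (I : dci natA intraR).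

Definition cext (c : concept A R) : set (dom I) := ext (@AI _ _ _ _ I) (@RI _ _ _ _ I) (@pi_ _ _ _ _ I) c.
Definition phi (c : concept A R) : set (feat I) := phiS (@pi_ _ _ _ _ I) (cext c).

Definition delta (c : concept A R) : set 'I_(k I) :=
  [set i | block (@part _ _ _ _ I) i `&` phi c <> set0].

(* A set U ⊆ ~ of pairs with pairwise distinct sources is encoded as the
   partial map u : s ↦ Some t for (s,t) ∈ U, None otherwise. *)
Definition validU (u : 'I_(k I) -> option 'I_(k I)) : Prop :=
  (forall s t, u s = Some t -> @sim _ _ _ _ I s t) /\
  (forall s s' t, u s = Some t -> u s' = Some t -> s = s').

Definition srcU (u : 'I_(k I) -> option 'I_(k I)) : set 'I_(k I) :=
  [set s | u s <> None].
Definition tgtU (u : 'I_(k I) -> option 'I_(k I)) : set 'I_(k I) :=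
  [set t | exists s, u s = Some t].

Definition transl (u : 'I_(k I) -> option 'I_(k I)) (f : feat I) : feat I :=
  match u (@part _ _ _ _ I f) with
  | Some t => @sigma _ _ _ _ I (@part _ _ _ _ I f) t f
  | None => f
  end.

Definition mu (c d : concept A R) : set (feat I -> feat I) :=
  [set g | exists u, validU u /\ g = transl u /\
     phi d = transl u @` phi c /\
     srcU u `<=` delta c /\
     tgtU u `&` (delta c `\` srcU u) = set0].

Definition sat_analogy (c1 c2 d1 d2 : concept A R) : Prop :=
  mu c1 c2 `&` mu d1 d2 <> set0.

Definition sat_incl (c d : concept A R) : Prop := cext c `<=` cext d.

Definition fully_specified (n : concept A R) : Prop :=
  cext n = [set d | phi n `<=` @pi_ _ _ _ _ I d].

End DCIdefs.

Arguments cext {A R natA intraR} I c.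
Arguments phi {A R natA intraR} I c.
Arguments delta {A R natA intraR} I c.
Arguments validU {A R natA intraR} I u.
Arguments srcU {A R natA intraR} I u.
Arguments tgtU {A R natA intraR} I u.
Arguments transl {A R natA intraR} I u f.
Arguments mu {A R natA intraR} I c d.
Arguments sat_analogy {A R natA intraR} I c1 c2 d1 d2.
Arguments sat_incl {A R natA intraR} I c d.
Arguments fully_specified {A R natA intraR} I n.

(* Since C1 is inhabited, phi(C1) lies in some pi(d), so by conditions (1)
   and (5) it meets at most one block of each ~-class.  Let s be a common
   translation of mu(C1,C2) and mu(C3,C4), and s' one of mu(D1,D2) and
   mu(D3,D4).  An element f of phi(D4) is s'(e) for some e in phi(D3), and,
   through mu(D2,D4), lies in the class of some g0 in phi(D2), a subset of
   phi(C2); so g0 = s'(h) = s(h0) with h, h0 in phi(C1), in the same block.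
   Thus s and s' send the block of h to the same block and agree on it, while
   on the other blocks of its class neither moves anything, their sources
   lying in delta(D1), a subset of delta(C1).  Hence f = s(e) lies in
   s(phi(C3)) = phi(C4). *)
From mathcomp Require Import all_boot.
From mathcomp Require Import boolp classical_sets.

Set Implicit Arguments.
Unset Strict Implicit.

Local Open Scope classical_set_scope.

Section DomainTranslations.
Variables (A R : Type) (natA : A -> Prop) (intraR : R -> Prop).
Variable I : dci natA intraR.

Local Notation idx := 'I_(k I).
Local Notation F := (feat I).

Lemma sigma_id (i : idx) (f : F) : part f = i -> sigma i i f = f.
Proof.
move=> fi; rewrite -[RHS](sigma_inv (sim_refl i) fi).
by rewrite (sigma_comp (sim_refl i) (sim_refl i) fi).
Qed.

Definition transl_idx (u : idx -> option idx) (i : idx) : idx := odflt i (u i).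

Lemma sim_transl_idx u i : validU I u -> sim i (transl_idx u i).
Proof.
by case=> uS _; rewrite /transl_idx; case ui: (u i) => [j|]; [apply: uS|apply: sim_refl].
Qed.

Lemma part_transl u f : validU I u -> part (transl I u f) = transl_idx u (part f).
Proof.
case=> uS _; rewrite /transl /transl_idx; case uf: (u (part f)) => [j|] //=.
exact/sigma_into/erefl/uS.
Qed.

Lemma sim_part_transl u f : validU I u -> sim (part f) (part (transl I u f)).
Proof. by move=> uV; rewrite part_transl //; apply: sim_transl_idx. Qed.

Lemma transl_sigma u f : transl I u f = sigma (part f) (transl_idx u (part f)) f.
Proof. by rewrite /transl /transl_idx; case: (u (part f)) => [j|] //=; rewrite sigma_id. Qed.

Lemma transl_out_src u f : ~ srcU I u (part f) -> transl I u f = f.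
Proof. by rewrite /transl /srcU /=; case: (u (part f)) => // j; case. Qed.

Lemma phi_incl (c d : concept A R) : sat_incl I c d -> phi I d `<=` phi I c.
Proof. by move=> cd f df x cx; apply/df/cd. Qed.

Lemma delta_sub (c d : concept A R) : phi I d `<=` phi I c -> delta I d `<=` delta I c.
Proof.
move=> dc i /= di; apply: contra_not di => ci; apply/seteqP; split=> // f [fi df].
by rewrite -ci; split=> //; apply: dc.
Qed.

Lemma fully_specified_incl (c d : concept A R) :
  fully_specified I c -> fully_specified I d -> phi I d `<=` phi I c -> sat_incl I c d.
Proof. by move=> fc fd dc x; rewrite fc fd /= => cx f /dc /cx. Qed.

Section InhabitedConcept.
Variable c : concept A R.
Hypothesis c_ne : cext I c <> set0.

Lemma phi_block_uniq f g :
  phi I c f -> phi I c g -> sim (part f) (part g) -> part f = part g.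
Proof.
move=> cf cg fg; have /eqP/set0P[x cx] := c_ne.
apply: contrapT => ne_fg; apply: (cond1 (d := x) (cond5 fg ne_fg erefl erefl)).
by move=> y [->|->]; [apply: cf | apply: cg]; apply: cx.
Qed.

Lemma delta_sim_uniq (i : idx) h : delta I c i -> phi I c h -> sim i (part h) -> i = part h.
Proof.
rewrite /delta /= => /eqP/set0P[f [fi cf]] ch; rewrite -fi => fh.
exact: phi_block_uniq.
Qed.

(* The blocks of the class of h other than its own miss delta(c), so neither
   translation moves their features. *)
Lemma transl_eq_on_class u v h e :
  validU I u -> validU I v -> srcU I u `<=` delta I c -> srcU I v `<=` delta I c ->
  phi I c h -> transl_idx u (part h) = transl_idx v (part h) ->
  sim (part e) (part h) -> transl I u e = transl I v e.
Proof.
move=> uV vV uc vc ch uvh eh.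
have [same_block | ne_eh] := pselect (part e = part h).
  by rewrite !transl_sigma same_block uvh.
have off_src w : srcU I w `<=` delta I c -> ~ srcU I w (part e).
  by move=> wc /wc /delta_sim_uniq /(_ ch eh).
by rewrite !transl_out_src //; apply: off_src.
Qed.

End InhabitedConcept.

Lemma phi_transl_image (c d : concept A R) u f :
  phi I d = transl I u @` phi I c -> phi I d f -> exists2 e, phi I c e & transl I u e = f.
Proof. by move=> -> [e ce <-]; exists e. Qed.

End DomainTranslations.

Theorem proposition11 (A R : Type) (natA : A -> Prop) (intraR : R -> Prop)
  (I : dci natA intraR) (C1 C2 C3 C4 D1 D2 D3 D4 : concept A R) :
  natural natA intraR C1 -> natural natA intraR C2 ->
  natural natA intraR C3 -> natural natA intraR C4 ->
  natural natA intraR D1 -> natural natA intraR D2 ->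
  natural natA intraR D3 -> natural natA intraR D4 ->
  fully_specified I C1 -> fully_specified I C2 ->
  fully_specified I C3 -> fully_specified I C4 ->
  fully_specified I D1 -> fully_specified I D2 ->
  fully_specified I D3 -> fully_specified I D4 ->
  cext I C1 <> set0 ->
  sat_analogy I C1 C2 C3 C4 ->
  sat_analogy I D1 D2 D3 D4 ->
  sat_analogy I D1 D3 D2 D4 ->
  sat_incl I C1 D1 -> sat_incl I C2 D2 -> sat_incl I C3 D3 ->
  sat_incl I C4 D4.
Proof.
move=> _ _ _ _ _ _ _ _ _ _ _ fsC4 _ _ _ fsD4 C1_ne an_C an_D an_D' /phi_incl D1C1
  /phi_incl D2C2 /phi_incl D3C3.
have /eqP/set0P[_ [[u [uV [-> [C12 [uC1 _]]]]] [u2 [_ [uu2 [C34 _]]]]]] := an_C.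
rewrite -{}uu2 in C34.
have /eqP/set0P[_ [[v [vV [-> [D12 [vD1 _]]]]] [v2 [_ [vv2 [D34 _]]]]]] := an_D.
rewrite -{}vv2 in D34.
have /eqP/set0P[_ [_ [w [wV [_ [D24 _]]]]]] := an_D'.
apply: fully_specified_incl => // f D4f.
have [e D3e ve] := phi_transl_image D34 D4f.
have [g0 /[dup] D2g0 /D2C2 C2g0 wg0] := phi_transl_image D24 D4f.
have [h D1h vh] := phi_transl_image D12 D2g0.
have [h0 C1h0 uh0] := phi_transl_image C12 C2g0.
have C1h := D1C1 _ D1h.
have h_g0 : sim (part h) (part g0) by rewrite -vh; apply: sim_part_transl.
have h0_g0 : sim (part h0) (part g0) by rewrite -uh0; apply: sim_part_transl.
have h0h : part h0 = part h.
  by apply: (phi_block_uniq C1_ne C1h0 C1h); apply: sim_trans h0_g0 (sim_sym h_g0).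
have e_h : sim (part e) (part h).
  have g0_f : sim (part g0) (part f) by rewrite -wg0; apply: sim_part_transl.
  have e_f : sim (part e) (part f) by rewrite -ve; apply: sim_part_transl.
  exact: sim_trans e_f (sim_sym (sim_trans h_g0 g0_f)).
rewrite C34 -ve -(transl_eq_on_class C1_ne uV vV uC1 _ C1h _ e_h).
- by exists e => //; apply: D3C3.
- exact: subset_trans vD1 (delta_sub D1C1).
- by rewrite -{1}h0h -!part_transl // uh0 vh.
Qed.
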